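(* For all $\lambda,\mu\in\Lambda(n,r)$ and every nonzero $a\in 1_\lambda\hat S(n,r)1_\mu$, one has $a\,\rho(a)\neq0$ (an element of $1_\lambda\hat S(n,r)1_\lambda$) and $\rho(a)\,a\neq 0$ (an element of $1_\mu\hat S(n,r)1_\mu$).
   Context: Fix integers $n\ge3$, $r\ge1$; indices are read modulo $n$. $\hat U=\hat{\mathbf U}_q(\hat{\mathfrak{gl}}_n)$ is the associative unital $\mathbb{Q}(q)$-algebra generated by $R^{\pm1}$, $K_i^{\pm1}$, $E_i$, $E_{-i}$ ($1\le i\le n$) subject to: the $K_i^{\pm1}$ pairwise commute and $K_iK_i^{-1}=K_i^{-1}K_i=1$; $E_iE_{-j}-E_{-j}E_i=\delta_{ij}\frac{K_iK_{i+1}^{-1}-K_i^{-1}K_{i+1}}{q-q^{-1}}$; $K_iE_{\pm j}=q^{\pm(\delta_{i,j}-\delta_{i,j+1})}E_{\pm j}K_i$; for $\epsilon,\delta\in\{1,-1\}$, $E_{\epsilon i}^2E_{\epsilon(i+\delta)}-(q+q^{-1})E_{\epsilon i}E_{\epsilon(i+\delta)}E_{\epsilon i}+E_{\epsilon(i+\delta)}E_{\epsilon i}^2=0$; $E_{\epsilon i}E_{\epsilon j}=E_{\epsilon j}E_{\epsilon i}$ if $j\not\equiv i\pm1\pmod n$; $RR^{-1}=R^{-1}R=1$; $RXR^{-1}=X'$ for $(X,X')\in\{(E_i,E_{i+1}),(E_{-i},E_{-(i+1)}),(K_i^{-1},K_{i+1}^{-1})\}$. The coproduct $\Delta$ is the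 algebra map with $\Delta(E_i)=E_i\otimes K_iK_{i+1}^{-1}+1\otimes E_i$, $\Delta(E_{-i})=K_i^{-1}K_{i+1}\otimes E_{-i}+E_{-i}\otimes1$, $\Delta(K_i^{\pm1})=K_i^{\pm1}\otimes K_i^{\pm1}$, $\Delta(R^{\pm1})=R^{\pm1}\otimes R^{\pm1}$. $\rho$ is the $\mathbb{Q}(q)$-linear algebra anti-involution of $\hat U$ with $\rho(E_i)=qK_iK_{i+1}^{-1}E_{-i}$, $\rho(E_{-i})=qK_i^{-1}K_{i+1}E_i$, $\rho(K_i)=K_i$, $\rho(R)=R^{-1}$. $V$ is the $\mathbb{Q}(q)$-vector space with basis $\{e_t\}_{t\in\mathbb{Z}}$, a $\hat U$-module via: $E_ie_{t+1}=e_t$ if $i\equiv t\pmod n$ and $0$ otherwise; $E_{-i}e_t=e_{t+1}$ if $i\equiv t\pmod n$ and $0$ otherwise; $K_i^{\pm1}e_t=q^{\pm1}e_t$ if $i\equiv t\pmod n$ and $e_t$ otherwise; $R^{\pm1}e_t=e_{t\pm1}$; $\hat U$ acts on $V^{\otimes r}$ via the iterated coproduct, giving $\psi_{n,r}\colon\hat U\to\mathrm{End}_{\mathbb{Q}(q)}(V^{\otimes r})$. The affine $q$-Schur algebra is $\hat S(n,r):=\psi_{n,r}(\hat U)$ (by affine Schur–Weyl duality this is the centralizer of the extended affine Hecke algebra action on $V^{\otimes r}$). The bilinear form on $V^{\otimes r}$ is $\langle e_{s_1}\otimes\cdots\otimes e_{s_r},e_{t_1}\otimes\cdots\otimes e_{t_r}\rangle=\prod_j\delta_{s_jt_j}$;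 one has $\langle Xv,w\rangle=\langle v,\rho(X)w\rangle$, so $\rho$ induces a well-defined anti-involution of $\hat S(n,r)$, again denoted $\rho$, by $\rho(\psi_{n,r}(X))=\psi_{n,r}(\rho(X))$. $\Lambda(n,r)=\{\lambda\in\mathbb{N}^n:\sum_i\lambda_i=r\}$; for $\lambda\in\Lambda(n,r)$, $1_\lambda\in\hat S(n,r)$ is the projection of $V^{\otimes r}$ onto the span of those $e_{t_1}\otimes\cdots\otimes e_{t_r}$ with $\#\{j: t_j\equiv i\pmod n\}=\lambda_i$ for all $i$ (so $\rho(1_\lambda)=1_\lambda$ and $\sum_{\lambda}1_\lambda=1$). *)

From HB Require Import structures.
From mathcomp Require Import all_boot all_order all_algebra fraction.
Set Implicit Arguments. Unset Strict Implicit. Unset Printing Implicit Defensive.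
Import Order.TTheory GRing.Theory Num.Theory.
Local Open Scope ring_scope.

Definition F : fieldType := {fraction {poly rat}}.
Definition q : F := FracField.tofrac 'X.

(* Generators of \hat U = U_q(\hat gl_n).  An index i : 'I_n stands for the
   generator index i+1 in {1,...,n}. gE i = E_{i+1}, gF i = E_{-(i+1)}. *)
Inductive gen (n : nat) : Type :=
 | gR | gRinv | gK of 'I_n | gKinv of 'I_n | gE of 'I_n | gF of 'I_n.
Arguments gR {n}. Arguments gRinv {n}.

(* Elements of \hat U are represented by (non-commutative polynomial)
   expressions in the generators; every element of \hat U is of this form. *)
Inductive term (n : nat) : Type :=
 | tGen of gen n
 | tOne
 | tAdd of term n & term n
 | tScale of F & term n
 | tMul of term n & term n.
Arguments tOne {n}.

Definition rho_gen n (g : gen n) : term n :=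
  match g with
  | gR => tGen gRinv
  | gRinv => tGen gR
  | gK i => tGen (gK i)
  | gKinv i => tGen (gKinv i)
  | gE i => tMul (tScale q (tMul (tGen (gK i)) (tGen (gKinv (ordS i))))) (tGen (gF i))
  | gF i => tMul (tScale q (tMul (tGen (gKinv i)) (tGen (gK (ordS i))))) (tGen (gE i))
  end.

Fixpoint rho n (x : term n) : term n :=
  match x with
  | tGen g => rho_gen g
  | tOne => tOne
  | tAdd a b => tAdd (rho a) (rho b)
  | tScale c a => tScale c (rho a)
  | tMul a b => tMul (rho b) (rho a)
  end.

Section Action.
Variables n r : nat.

(* Basis of V^{\otimes r}: e_{t_1} (x) ... (x) e_{t_r}, t : 'I_r -> int. *)
Definition tens := {ffun 'I_r -> int}.
(* A vector of V^{\otimes r}: a finite formal linear combination of basis tensors. *)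
Definition vec := seq (F * tens).
(* A linear endomorphism of V^{\otimes r}, given by its values on the basis. *)
Definition op := tens -> vec.

Definition coef (v : vec) (s : tens) : F := \sum_(p <- v | p.2 == s) p.1.
Definition op_nonzero (A : op) : Prop := exists t s, coef (A t) s != 0.

Definition vscale (c : F) (v : vec) : vec := [seq (c * p.1, p.2) | p <- v].
Definition apply (A : op) (v : vec) : vec := flatten [seq vscale p.1 (A p.2) | p <- v].
Definition opcomp (A B : op) : op := fun t => apply A (B t).

Definition cong (s i : int) : bool := ((s - i) %% n)%Z == 0.
Definition idx (i : 'I_n) : int := (i.+1)%:Z.

Definition upd (t : tens) (j : 'I_r) (v : int) : tens :=
  [ffun k => if k == j then v else t k].
Definition shift (t : tens) (d : int) : tens := [ffun k => t k + d].

(* exponent of q in K_i K_{i+1}^{-1} e_s *)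
Definition kexp (i s : int) : int := (cong s i : nat)%:Z - (cong s (i + 1) : nat)%:Z.

(* Action via the iterated coproduct:
   Delta^(r)(E_i)    = sum_j 1^{(j-1)} (x) E_i (x) (K_i K_{i+1}^{-1})^{(r-j)}
   Delta^(r)(E_{-i}) = sum_j (K_i^{-1} K_{i+1})^{(j-1)} (x) E_{-i} (x) 1^{(r-j)}
   Delta^(r)(K_i^{+-1}) = (K_i^{+-1})^{(r)},  Delta^(r)(R^{+-1}) = (R^{+-1})^{(r)}. *)
Definition gen_act (g : gen n) : op := fun t =>
  match g with
  | gR => [:: (1, shift t 1)]
  | gRinv => [:: (1, shift t (-1))]
  | gK i => [:: (\prod_(k < r) q ^ ((cong (t k) (idx i) : nat)%:Z), t)]
  | gKinv i => [:: (\prod_(k < r) q ^ (- (cong (t k) (idx i) : nat)%:Z), t)]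
  | gE i => [seq (\prod_(k < r | (j < k)%N) q ^ (kexp (idx i) (t k)), upd t j (t j - 1))
             | j : 'I_r <- enum 'I_r & cong (t j - 1) (idx i)]
  | gF i => [seq (\prod_(k < r | (k < j)%N) q ^ (- kexp (idx i) (t k)), upd t j (t j + 1))
             | j : 'I_r <- enum 'I_r & cong (t j) (idx i)]
  end.

Fixpoint psi (x : term n) : op :=
  match x with
  | tGen g => gen_act g
  | tOne => fun t => [:: (1, t)]
  | tAdd a b => fun t => psi a t ++ psi b t
  | tScale c a => fun t => vscale c (psi a t)
  | tMul a b => opcomp (psi a) (psi b)
  end.

Definition wt (t : tens) (i : 'I_n) : nat := \sum_(j < r) (cong (t j) (idx i) : nat).

Definition one_w (lam : 'I_n -> nat) : op := fun t =>
  if [forall i, wt t i == lam i] then [:: (1, t)] else [::].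

(* 1_lam psi(x) 1_mu : the general element of 1_lam \hat S(n,r) 1_mu *)
Definition cut (lam : 'I_n -> nat) (x : term n) (mu : 'I_n -> nat) : op :=
  opcomp (one_w lam) (opcomp (psi x) (one_w mu)).

End Action.

From HB Require Import structures.
From mathcomp Require Import all_boot all_order all_algebra fraction generic_quotient.
From mathcomp Require Import ring.
Set Implicit Arguments. Unset Strict Implicit. Unset Printing Implicit Defensive.
Import GRing.Theory Num.Theory.
Local Open Scope ring_scope.
Local Notation "x %:F" := (@FracField.tofrac _ x) (format "x %:F").

(* The anti-involution rho is the adjoint for the standard bilinear form on
   V^(x)r: psi(rho x) is the transpose of psi(x) in the tensor basis.  We check
   this on generators (R, K_i, and the diagonal q-prefactors of rho(E_(+-i)) are
   easy; for E_(+-i) the entries of both sides are matched term by term, using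
   the exponent bookkeeping of the coproduct) and extend it to all of U since
   transposition reverses products.  As the weight idempotents are diagonal, the
   element a = 1_lam psi(x) 1_mu has transpose rho(a) = 1_mu psi(rho x) 1_lam.

   For any operator A with transpose B, the diagonal entry of A B at s is
   <B s, B s>, the sum of the squares of the entries of the column B s.  Over
   F = Q(q) a sum of squares vanishes only if every term does (clear denominators,
   then evaluate the polynomials at rational points), so A B <> 0 whenever A <> 0;
   applying this to (A, B) and (B, A) gives both claims. *)

Definition sum_sq_definite (R : pzRingType) : Prop :=
  forall s : seq R, \sum_(c <- s) c ^+ 2 = 0 -> all (fun c => c == 0) s.

(* Over a real domain: a vanishing sum of squares of polynomials forces each of
   them to vanish at every point, hence everywhere. *)
Lemma poly_sum_sq_definite (R : realDomainType) : sum_sq_definite {poly R}.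
Proof.
move=> s sum0; apply/allP => p ps; apply/eqP.
have root_p (x : R) : root p x.
  have /eqP := congr1 (horner^~ x) sum0.
  rewrite horner_sum horner0 psumr_eq0 => [/allP/(_ p ps)|c _].
    by rewrite horner_exp sqrf_eq0.
  by rewrite horner_exp sqr_ge0.
apply: (@roots_geq_poly_eq0 _ _ [seq i%:R | i <- iota 0 (size p)]).
- by apply/allP => y _; apply: root_p.
- by rewrite map_inj_uniq ?iota_uniq // => a b /eqP; rewrite eqr_nat => /eqP.
- by rewrite size_map size_iota.
Qed.

Lemma tofrac_denom (R : idomainType) (x : {fraction R}) :
  exists2 b : R, b != 0 & exists a : R, x * b%:F = a%:F.
Proof.
elim/quotW: x => y; exists y.2; first exact: denom_ratioP.
exists y.1; unlock tofrac; rewrite !piE; apply/eqP; rewrite FracField.equivf_def.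
rewrite /= /FracField.mulf /= !numden_Ratio ?mulf_neq0 ?oner_neq0 ?denom_ratioP //.
by rewrite !mulr1 mulrC.
Qed.

Lemma tofrac_common_denom (R : idomainType) (s : seq {fraction R}) :
  exists2 d : R, d != 0 & exists ps : seq R, [seq c * d%:F | c <- s] = [seq p%:F | p <- ps].
Proof.
elim: s => [|c s [d d_neq0 [ps eq_ps]]]; first by exists 1; [exact: oner_neq0 | exists [::]].
have [b b_neq0 [a eq_a]] := tofrac_denom c.
exists (d * b); first by rewrite mulf_neq0.
exists (a * d :: [seq p * b | p <- ps]) => /=; congr (_ :: _).
  by rewrite !tofracM -eq_a; ring.
transitivity [seq c' * b%:F | c' <- [seq c' * d%:F | c' <- s]].
  by rewrite -map_comp; apply: eq_map => c' /=; rewrite tofracM mulrA.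
by rewrite eq_ps -!map_comp; apply: eq_map => p /=; rewrite tofracM.
Qed.

(* Clearing denominators transfers definiteness to the fraction field. *)
Lemma frac_sum_sq_definite (R : idomainType) :
  sum_sq_definite R -> sum_sq_definite {fraction R}.
Proof.
move=> defR s sum0; have [d d_neq0 [ps eq_ps]] := tofrac_common_denom s.
have /defR/allP ps0 : \sum_(p <- ps) p ^+ 2 = 0.
  apply/eqP; rewrite -tofrac_eq0 rmorph_sum /=.
  under eq_bigr do rewrite rmorphXn.
  rewrite -(big_map (@FracField.tofrac R) xpredT (fun c => c ^+ 2)) -eq_ps big_map.
  under eq_bigr do rewrite exprMn.
  by rewrite -mulr_suml sum0 mul0r.
apply/allP => c cs; have : c * d%:F \in [seq p%:F | p <- ps] by rewrite -eq_ps; apply: map_f.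
case/mapP => p /ps0/eqP-> /eqP; rewrite rmorph0 mulf_eq0 tofrac_eq0 (negbTE d_neq0).
by rewrite orbF.
Qed.

Lemma F_sum_sq_definite : sum_sq_definite F.
Proof. exact: frac_sum_sq_definite (@poly_sum_sq_definite rat). Qed.

Section Vectors.
Variable r : nat.
Implicit Types (v w : vec r) (s t : tens r) (A B C D : op r).

Lemma coef_single (c : F) u s : coef [:: (c, u)] s = if u == s then c else 0.
Proof. by rewrite /coef big_cons big_nil; case: ifP; rewrite ?addr0. Qed.

Lemma coef_cat v w s : coef (v ++ w) s = coef v s + coef w s.
Proof. by rewrite /coef big_cat. Qed.

Lemma coef_scale (c : F) v s : coef (vscale c v) s = c * coef v s.
Proof. by rewrite /coef /vscale big_map mulr_sumr. Qed.

(* The bilinear form <v, w> = sum_s coef v s * coef w s, written as a sum over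
   the entries of v. *)
Definition form v w : F := \sum_(p <- v) p.1 * coef w p.2.

Lemma form_sym v w : form v w = form w v.
Proof.
rewrite /form /coef; under eq_bigr do rewrite mulr_sumr big_mkcond.
rewrite exchange_big /=; apply: eq_bigr => p' _.
rewrite mulr_sumr [RHS]big_mkcond; apply: eq_bigr => p _ /=.
by rewrite eq_sym; case: eqP; rewrite // mulrC.
Qed.

Lemma form_self_sum_sq v :
  form v v = \sum_(u <- undup (map snd v)) coef v u ^+ 2.
Proof.
set U := undup (map snd v).
transitivity (\sum_(p <- v) \sum_(u <- U | u == p.2) p.1 * coef v u).
  apply: eq_big_seq => p pv; rewrite -big_filter filter_pred1_uniq ?undup_uniq //.
    by rewrite big_seq1.
  by rewrite mem_undup map_f.
under eq_bigr do rewrite big_mkcond.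
rewrite exchange_big; apply: eq_bigr => u _.
rewrite expr2 /coef mulr_suml [RHS]big_mkcond; apply: eq_bigr => p _ /=.
by rewrite eq_sym.
Qed.

Lemma form_self_neq0 v s : coef v s != 0 -> form v v != 0.
Proof.
move=> vs_neq0; rewrite form_self_sum_sq; apply/eqP => sum0.
have sU : s \in undup (map snd v).
  rewrite mem_undup; apply: contraR vs_neq0 => s_notin.
  rewrite /coef big_seq_cond big1 // => p /andP [pv /eqP ps].
  by case/negP: s_notin; rewrite -ps map_f.
have := @F_sum_sq_definite (map (coef v) (undup (map snd v))).
by rewrite big_map => /(_ sum0)/allP/(_ _ (map_f _ sU)); apply/negP.
Qed.

Lemma coef_apply A v s : coef (apply A v) s = \sum_(p <- v) p.1 * coef (A p.2) s.
Proof.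
elim: v => [|p v IH]; first by rewrite /coef !big_nil.
by rewrite big_cons -IH /apply /= coef_cat coef_scale.
Qed.

Lemma sum_apply A v (h : tens r -> F) :
  \sum_(p <- apply A v) p.1 * h p.2 = \sum_(p <- v) p.1 * \sum_(p' <- A p.2) p'.1 * h p'.2.
Proof.
elim: v => [|p v IH]; first by rewrite /apply !big_nil.
rewrite /apply /= big_cat big_cons -IH /vscale big_map mulr_sumr.
by congr (_ + _); apply: eq_bigr => p' _; rewrite mulrA.
Qed.

Lemma coef_opcompA A B C t s :
  coef (opcomp (opcomp A B) C t) s = coef (opcomp A (opcomp B C) t) s.
Proof.
rewrite /opcomp coef_apply [RHS]coef_apply (sum_apply _ _ (fun u => coef (A u) s)).
by apply: eq_bigr => p _; rewrite coef_apply.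
Qed.

End Vectors.

Section Transposition.
Variable r : nat.
Implicit Types (v : vec r) (s t : tens r) (A B C D : op r).

Definition transposed A B : Prop := forall t s, coef (B t) s = coef (A s) t.

Lemma transposed_sym A B : transposed A B -> transposed B A.
Proof. by move=> hAB t s; rewrite hAB. Qed.

Lemma coef_apply_transposed A B :
  transposed A B -> forall v s, coef (apply B v) s = form v (A s).
Proof. by move=> hAB v s; rewrite coef_apply; apply: eq_bigr => p _; rewrite hAB. Qed.

Lemma transposed_comp A B C D :
  transposed A B -> transposed C D -> transposed (opcomp A C) (opcomp D B).
Proof.
move=> hAB hCD t s; rewrite /opcomp (coef_apply_transposed hCD) form_sym.
by rewrite (coef_apply_transposed (transposed_sym hAB)).
Qed.

Lemma transposed_nonzero A B : transposed A B -> op_nonzero A -> op_nonzero B.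
Proof. by move=> hAB [t [s hts]]; exists s, t; rewrite hAB. Qed.

(* The diagonal entries of A A^T are the squared norms <B t, B t> of the columns of
   B = A^T; hence A A^T vanishes only if A does. *)
Lemma gram_neq0 A B : transposed A B -> op_nonzero A -> op_nonzero (opcomp A B).
Proof.
move=> hAB [t [s hts]]; exists s, s.
rewrite /opcomp (coef_apply_transposed (transposed_sym hAB)).
by apply: (form_self_neq0 (s := t)); rewrite hAB.
Qed.

Definition is_diag D (d : tens r -> F) : Prop :=
  forall t s, coef (D t) s = if t == s then d t else 0.

Lemma is_diag_single (d : tens r -> F) : is_diag (fun t => [:: (d t, t)]) d.
Proof. by move=> t s; rewrite coef_single. Qed.

Lemma coef_apply_diag D d :
  is_diag D d -> forall v s, coef (apply D v) s = d s * coef v s.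
Proof.
move=> hD v s; rewrite coef_apply; under eq_bigr do rewrite hD.
rewrite /coef mulr_sumr [RHS]big_mkcond; apply: eq_bigr => p _ /=.
by case: eqP => [->|]; rewrite ?mulr0 // mulrC.
Qed.

Lemma is_diag_comp D D' d d' :
  is_diag D d -> is_diag D' d' -> is_diag (opcomp D D') (fun t => d t * d' t).
Proof.
move=> hD hD' t s; rewrite /opcomp (coef_apply_diag hD) hD'.
by case: eqP => [->|]; rewrite ?mulr0.
Qed.

Lemma is_diag_scale (c : F) D d :
  is_diag D d -> is_diag (fun t => vscale c (D t)) (fun t => c * d t).
Proof. by move=> hD t s; rewrite coef_scale hD; case: eqP; rewrite ?mulr0. Qed.

Lemma transposed_diag D d : is_diag D d -> transposed D D.
Proof. by move=> hD t s; rewrite !hD eq_sym; case: eqP => [->|]. Qed.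

End Transposition.

Section Congruences.
Variable n : nat.
Implicit Types (a b : int) (i : 'I_n).

Lemma congE a b : cong n a b = (n %| a - b)%Z.
Proof. by rewrite /cong; case: dvdz_mod0P => [->|/eqP/negbTE]. Qed.

Lemma cong_shift a b c : cong n (a + c) (b + c) = cong n a b.
Proof. by rewrite !congE (_ : a + c - (b + c) = a - b) //; ring. Qed.

Lemma cong_ordS a i : cong n a (idx (ordS i)) = cong n a (idx i + 1).
Proof.
rewrite !congE /idx /=; set m := i.+1.
have -> : a - (Posz m + 1) = a - Posz (m %% n).+1 - Posz (m %/ n) * Posz n.
  by rewrite {1}(divn_eq m n) -addn1 !PoszD PoszM; ring.
by rewrite [RHS]rpredBr // dvdz_mull.
Qed.

Hypothesis n_gt1 : (1 < n)%N.

Lemma cong_succ_l a b : cong n a b -> cong n (a + 1) b = false.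
Proof.
rewrite !congE => hab; apply/negbTE/negP => hab1.
have : (n %| (a + 1 - b) - (a - b))%Z by rewrite rpredB.
by rewrite (_ : a + 1 - b - (a - b) = 1) ?dvdz1 ?gtn_eqF //; ring.
Qed.

Lemma cong_succ_r a b : cong n a b -> cong n a (b + 1) = false.
Proof.
rewrite !congE => hab; apply/negbTE/negP => hab1.
have : (n %| (a - b) - (a - (b + 1)))%Z by rewrite rpredB.
by rewrite (_ : a - b - (a - (b + 1)) = 1) ?dvdz1 ?gtn_eqF //; ring.
Qed.

(* On a tensor factor congruent to i, K_i K_(i+1)^-1 acts by q; after raising it by
   one, by q^-1. *)
Lemma kexp_cong a b : cong n a b -> kexp n b a = 1.
Proof. by move=> hab; rewrite /kexp hab cong_succ_r. Qed.

Lemma kexp_cong_succ a b : cong n a b -> kexp n b (a + 1) = -1.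
Proof. by move=> hab; rewrite /kexp cong_succ_l // cong_shift hab. Qed.

End Congruences.

Section Generators.
Variables n r : nat.
Implicit Types (i : 'I_n) (t s : tens r) (j : 'I_r).

Lemma q_neq0 : q != 0.
Proof. by rewrite /q tofrac_eq0 polyX_eq0. Qed.

Lemma qpow_sum (P : pred 'I_r) (e : 'I_r -> int) :
  \prod_(k < r | P k) q ^ e k = q ^ (\sum_(k < r | P k) e k).
Proof.
symmetry; apply: (big_morph (fun z => q ^ z)); last exact: expr0z.
by move=> x y; apply: expfzDr q_neq0.
Qed.

(* K_i K_(i+1)^-1 acts on the basis tensor e_t by q ^ kweight i t. *)
Definition kweight i t : int := \sum_(k < r) kexp n (idx i) (t k).

Lemma kweightE i t : kweight i t =
  \sum_(k < r) (cong n (t k) (idx i) : nat)%:Z - \sum_(k < r) (cong n (t k) (idx (ordS i)) : nat)%:Z.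
Proof. by rewrite -sumrB; apply: eq_bigr => k _; rewrite cong_ordS. Qed.

Lemma is_diag_rhoE i :
  is_diag (psi (r := r) (tScale q (tMul (tGen (gK i)) (tGen (gKinv (ordS i))))))
          (fun t => q ^ (1 + kweight i t)).
Proof.
have hD := is_diag_scale q (is_diag_comp (@is_diag_single r (fun t =>
  \prod_(k < r) q ^ (cong n (t k) (idx i) : nat)%:Z)) (@is_diag_single r (fun t =>
  \prod_(k < r) q ^ (- (cong n (t k) (idx (ordS i)) : nat)%:Z)))).
move=> t s; rewrite hD; case: eqP => // _.
by rewrite !qpow_sum sumrN kweightE !expfzDr ?q_neq0 // expr1z.
Qed.

Lemma is_diag_rhoF i :
  is_diag (psi (r := r) (tScale q (tMul (tGen (gKinv i)) (tGen (gK (ordS i))))))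
          (fun t => q ^ (1 - kweight i t)).
Proof.
have hD := is_diag_scale q (is_diag_comp (@is_diag_single r (fun t =>
  \prod_(k < r) q ^ (- (cong n (t k) (idx i) : nat)%:Z))) (@is_diag_single r (fun t =>
  \prod_(k < r) q ^ (cong n (t k) (idx (ordS i)) : nat)%:Z))).
move=> t s; rewrite hD; case: eqP => // _.
rewrite !qpow_sum -expfzDr ?q_neq0 // -{1}[q]expr1z -expfzDr ?q_neq0 //.
by rewrite kweightE sumrN; congr (q ^ _); ring.
Qed.

Lemma upd_at t j (v : int) : upd t j v j = v.
Proof. by rewrite ffunE eqxx. Qed.

Lemma upd_step_swap t s j (d : int) :
  (upd t j (t j + d) == s) = (upd s j (s j - d) == t).
Proof.
apply/eqP/eqP => <-; apply/ffunP => k; rewrite !ffunE eqxx ?addrK ?subrK;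
  by case: eqP => // ->.
Qed.

Lemma sum_upd_off (P : pred 'I_r) (f : int -> int) t j (v : int) :
  ~~ P j -> \sum_(k < r | P k) f (upd t j v k) = \sum_(k < r | P k) f (t k).
Proof.
move=> Pj; apply: eq_bigr => k Pk; rewrite ffunE; case: eqP => // kj.
by move: Pj; rewrite -kj Pk.
Qed.

Lemma sum_upd (f : int -> int) t j (v : int) :
  \sum_(k < r) f (upd t j v k) =
  \sum_(k < r | (k < j)%N) f (t k) + f v + \sum_(k < r | (j < k)%N) f (t k).
Proof.
rewrite (bigD1 j) //= upd_at sum_upd_off ?eqxx // (bigID (fun k : 'I_r => (k < j)%N)) /=.
rewrite addrCA addrA; congr (_ + _ + _); apply: eq_bigl => k;
  by rewrite -(inj_eq val_inj) /=; case: ltngtP.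
Qed.

Lemma coef_gE i t s :
  coef (gen_act (gE i) t) s =
  \sum_(j <- enum 'I_r | cong n (t j - 1) (idx i) && (upd t j (t j - 1) == s))
     \prod_(k < r | (j < k)%N) q ^ (kexp n (idx i) (t k)).
Proof. by rewrite /coef /= big_map big_filter_cond. Qed.

Lemma coef_gF i t s :
  coef (gen_act (gF i) t) s =
  \sum_(j <- enum 'I_r | cong n (t j) (idx i) && (upd t j (t j + 1) == s))
     \prod_(k < r | (k < j)%N) q ^ (- kexp n (idx i) (t k)).
Proof. by rewrite /coef /= big_map big_filter_cond. Qed.

Hypothesis n_gt1 : (1 < n)%N.

(* Matching the terms of (E_i)^T and q K_i K_(i+1)^-1 E_(-i) factor by factor;
   the exponents agree since kexp changes by -1 at the moving factor. *)
Lemma transposed_E i : transposed (gen_act (gE i)) (psi (r := r) (rho (tGen (gE i)))).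
Proof.
move=> t s; rewrite [LHS](coef_apply_diag (is_diag_rhoE i)) coef_gF coef_gE mulr_sumr.
apply: eq_big => j.
  by rewrite upd_step_swap; case: eqP => [<-|]; rewrite ?andbF // upd_at.
move=> /andP [tj_i /eqP <-].
rewrite !qpow_sum -expfzDr ?q_neq0 //; congr (q ^ _).
by rewrite /kweight sum_upd sum_upd_off ?ltnn // kexp_cong_succ // sumrN; ring.
Qed.

(* Likewise for E_(-i), where kexp changes by +1 at the moving factor. *)
Lemma transposed_F i : transposed (gen_act (gF i)) (psi (r := r) (rho (tGen (gF i)))).
Proof.
move=> t s; rewrite [LHS](coef_apply_diag (is_diag_rhoF i)) coef_gE coef_gF mulr_sumr.
apply: eq_big => j.
  by rewrite upd_step_swap opprK; case: eqP => [<-|]; rewrite ?andbF // upd_at addrK.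
move=> /andP [tj_i /eqP <-].
rewrite !qpow_sum -expfzDr ?q_neq0 //; congr (q ^ _).
by rewrite /kweight sum_upd sumrN sum_upd_off ?ltnn // kexp_cong //; ring.
Qed.

Lemma shift_swap t s : (shift t 1 == s) = (shift s (-1) == t).
Proof. by apply/eqP/eqP => <-; apply/ffunP => k; rewrite !ffunE ?addrK ?subrK. Qed.

Lemma transposed_gen (g : gen n) : transposed (gen_act g) (psi (r := r) (rho (tGen g))).
Proof.
case: g => [| |i|i|i|i].
- by move=> t s; rewrite /= !coef_single -shift_swap.
- by move=> t s; rewrite /= !coef_single shift_swap.
- exact: transposed_diag (is_diag_single _).
- exact: transposed_diag (is_diag_single _).
- exact: transposed_E.
- exact: transposed_F.
Qed.

Lemma transposed_psi (x : term n) : transposed (psi x) (psi (r := r) (rho x)).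
Proof.
elim: x => [g| |a IHa b IHb|c a IHa|a IHa b IHb].
- exact: transposed_gen.
- exact: transposed_diag (is_diag_single (fun=> 1)).
- by move=> t s /=; rewrite !coef_cat IHa IHb.
- by move=> t s /=; rewrite !coef_scale IHa.
- exact: transposed_comp.
Qed.

End Generators.

Lemma transposed_one_w (n r : nat) (lam : 'I_n -> nat) :
  transposed (one_w (r := r) lam) (one_w lam).
Proof.
apply: (@transposed_diag _ _ (fun t => if [forall i, wt t i == lam i] then 1 else 0)).
move=> t s; rewrite /one_w; case: ifP => _; first by rewrite coef_single.
by rewrite /coef big_nil; case: eqP.
Qed.

Lemma transposed_cut (n r : nat) (n_gt1 : (1 < n)%N) (lam mu : 'I_n -> nat) (x : term n) :
  transposed (cut (r := r) lam x mu) (cut mu (rho x) lam).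
Proof.
move=> t s; rewrite /cut -coef_opcompA.
apply: transposed_comp (transposed_one_w lam) _ t s.
exact: transposed_comp (transposed_psi n_gt1 x) (transposed_one_w mu).
Qed.

Local Close Scope ring_scope.

Theorem lemma3p8 (n r : nat) (hn : 3 <= n) (hr : 1 <= r)
  (lam mu : 'I_n -> nat)
  (hlam : \sum_(i < n) lam i = r) (hmu : \sum_(i < n) mu i = r)
  (x : term n) :
  @op_nonzero r (@cut n r lam x mu) ->
  @op_nonzero r (@opcomp r (@cut n r lam x mu) (@cut n r mu (rho x) lam)) /\
  @op_nonzero r (@opcomp r (@cut n r mu (rho x) lam) (@cut n r lam x mu)).
Proof.
move=> a_neq0; have a_rho := transposed_cut (r := r) (ltnW hn) lam mu x.
split; first exact: gram_neq0.
exact: gram_neq0 (transposed_sym a_rho) (transposed_nonzero a_rho a_neq0).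
Qed.
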